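(* Let $X$ be a real or complex separable infinite-dimensional F-space and $T:X\to X$ a continuous linear operator. If $T$ is recurrent and cyclic, then the set of cyclic vectors of $T$ is a dense $G_\delta$ subset of $X$. In particular, if $T$ is recurrent and cyclic, then $T$ is quasi-rigid.
   Context: An F-space is a completely metrizable topological vector space. $T$ is recurrent if the set of $x$ with $x\in\overline{\{T^nx:n\geq1\}}$ is dense in $X$. A vector $x$ is cyclic if $\mathrm{span}\{T^nx:n\geq0\}$ is dense in $X$; $T$ is cyclic if it has a cyclic vector. $T$ is quasi-rigid if there exist a strictly increasing sequence $(n_k)$ of positive integers and a dense $Y\subset X$ with $T^{n_k}x\to x$ for every $x\in Y$. *)

From mathcomp Require Import all_boot all_algebra.
From mathcomp Require Import all_classical all_reals all_analysis.
From mathcomp Require Export complex.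
From mathcomp Require Import borel_hierarchy.

Set Implicit Arguments.
Unset Strict Implicit.
Unset Printing Implicit Defensive.

Import GRing.Theory Num.Theory.
Local Open Scope classical_set_scope.
Local Open Scope ring_scope.

(* The topological vector space structure (continuity of +, -, and of the *)
(* scalar multiplication K x X -> X) is given by topologicalLmodType K.    *)

Definition is_metric (R : realType) (X : Type) (d : X -> X -> R) : Prop :=
  [/\ forall x y, 0 <= d x y,
      forall x y, d x y = 0 <-> x = y,
      forall x y, d x y = d y x &
      forall x y z, d x z <= d x y + d y z].

Definition metric_induces_topology (R : realType) (X : topologicalType)
    (d : X -> X -> R) : Prop :=
  forall (x : X) (U : set X),
    nbhs x U <-> exists2 e : R, 0 < e & [set y | d x y < e] `<=` U.

Definition metric_complete (R : realType) (X : topologicalType)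
    (d : X -> X -> R) : Prop :=
  forall u : nat -> X,
    (forall e : R, 0 < e -> exists N : nat,
        forall m n : nat, (N <= m)%N -> (N <= n)%N -> d (u m) (u n) < e) ->
    exists l : X, u @ \oo --> l.

Definition completely_metrizable (R : realType) (X : topologicalType) : Prop :=
  exists d : X -> X -> R,
    [/\ is_metric d, metric_induces_topology d & metric_complete d].

Definition F_space (R : realType) (K : numFieldType)
    (X : topologicalLmodType K) : Prop :=
  completely_metrizable R X.

Definition separable (X : topologicalType) : Prop :=
  exists D : set X, countable D /\ dense D.

Definition infinite_dimensional (K : numFieldType) (X : lmodType K) : Prop :=
  forall n : nat, exists v : 'I_n -> X,
    forall c : 'I_n -> K, \sum_(i < n) c i *: v i = 0 -> forall i, c i = 0.

Definition recurrent_vector (X : topologicalType) (T : X -> X) (x : X) : Prop :=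
  closure [set iter n T x | n in [set n : nat | (1 <= n)%N]] x.

Definition recurrent (X : topologicalType) (T : X -> X) : Prop :=
  dense [set x | recurrent_vector T x].

Definition orbit_span (K : numFieldType) (X : lmodType K) (T : X -> X) (x : X)
    : set X :=
  [set y | exists (N : nat) (c : nat -> K), y = \sum_(i < N) c i *: iter i T x].

Definition cyclic_vector (K : numFieldType) (X : topologicalLmodType K)
    (T : X -> X) (x : X) : Prop :=
  dense (orbit_span T x).

Definition cyclic_operator (K : numFieldType) (X : topologicalLmodType K)
    (T : X -> X) : Prop :=
  exists x : X, cyclic_vector T x.

Definition quasi_rigid (X : topologicalType) (T : X -> X) : Prop :=
  exists nk : nat -> nat,
    [/\ (1 <= nk 0)%N, (forall k, (nk k < nk k.+1)%N) &
        exists Y : set X, dense Y /\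
          forall x, Y x -> (fun k => iter (nk k) T x) @ \oo --> x].

Definition thm7_for (R : realType) (K : numFieldType) : Prop :=
  forall (X : topologicalLmodType K) (T : {linear X -> X}),
    F_space R X -> separable X -> infinite_dimensional X ->
    continuous T ->
    recurrent T -> cyclic_operator T ->
    (dense [set x | cyclic_vector T x] /\ Gdelta [set x | cyclic_vector T x])
    /\ quasi_rigid T.

From Pilot Require Import Defs.
From mathcomp Require Import all_boot all_order all_algebra all_field.
From mathcomp Require Import all_classical all_reals all_analysis.
From mathcomp Require Import complex borel_hierarchy.
From mathcomp Require Import ring lra zify.
Set Implicit Arguments. Unset Strict Implicit. Unset Printing Implicit Defensive.
Import Order.TTheory GRing.Theory Num.Theory numFieldNormedType.Exports.
Local Open Scope classical_set_scope.
Local Open Scope ring_scope.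

(* In a separable space the cyclic
      vectors form a G_delta; the vectors x with d(x, T^n x) < 1/(m+1) for
      some n > 0 form dense open sets.  If cyclic vectors are dense, Baire's
      theorem yields a vector x that is both cyclic and recurrent, and along
      its return times n_k we get T^(n_k) p(T) x --> p(T) x for every
      polynomial p: this is quasi-rigidity.  So everything reduces to the
      density of the cyclic vectors.

   Using recurrence, p(T)
      has dense range whenever p has no root on the unit circle: for a factor
      X - r with |r| < 1, P_n = X^n - r^n is a multiple of it and
      P_(n_k)(T) y --> y along the return times of a recurrent y (|r| > 1 is
      symmetric), and dense range is preserved under products.  Such a p(T)
      maps cyclic vectors to cyclic vectors.

   If x is cyclic and q(T) x approximates a target, the
      rescaled polynomials q((1 + 1/(k+1)) X) have no roots on the unit circle
      for large k and q((1 + 1/(k+1)) X)(T) x --> q(T) x, giving cyclic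
      vectors near the target.  Over C every polynomial splits into linear
      factors; over R the non-real roots are grouped into real quadratic
      factors (X - mu)(X - conj mu), handled like the linear ones. *)

Lemma dense_subset (X : topologicalType) (A B : set X) :
  A `<=` B -> dense A -> dense B.
Proof.
move=> AB dA O O0 oO; have [x [Ox Ax]] := dA O O0 oO.
by exists x; split => //; apply: AB.
Qed.

Section Reciprocals.
Variable R : realType.

Lemma invS_gt0 (m : nat) : (0 : R) < m.+1%:R^-1.
Proof. by rewrite invr_gt0 ltr0Sn. Qed.

Lemma invS_le (n m : nat) : (n <= m)%N -> (m.+1%:R^-1 : R) <= n.+1%:R^-1.
Proof. by move=> nm; rewrite lef_pV2 ?posrE ?ltr0Sn // ler_nat. Qed.

Lemma invS_lt (e : R) : 0 < e -> exists m : nat, m.+1%:R^-1 < e.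
Proof. by move=> e0; have [m] := ltr_add_invr e0; rewrite add0r; exists m. Qed.

End Reciprocals.

Section MetricTopology.
Variables (R : realType) (X : topologicalType) (d : X -> X -> R).
Hypotheses (d_metric : is_metric d) (d_top : metric_induces_topology d).

Lemma dist_ge0 x y : 0 <= d x y. Proof. by case: d_metric. Qed.
Lemma dist_sym x y : d x y = d y x. Proof. by case: d_metric. Qed.
Lemma dist_triangle x y z : d x z <= d x y + d y z. Proof. by case: d_metric. Qed.
Lemma dist_xx x : d x x = 0.
Proof. by case: d_metric => _ h _ _; apply: (proj2 (h x x)). Qed.
Lemma dist_eq0 x y : d x y = 0 -> x = y.
Proof. by case: d_metric => _ h _ _; apply: (proj1 (h x y)). Qed.

Lemma ball_nbhs x e : 0 < e -> nbhs x [set y | d x y < e].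
Proof. by move=> e0; apply/d_top; exists e. Qed.

Lemma open_ball x e : open [set y | d x y < e].
Proof.
rewrite openE => y /= dxy; apply/d_top; exists (e - d x y); first by rewrite subr_gt0.
by move=> z /= dyz; have := dist_triangle x y z; lra.
Qed.

Lemma closure_distP S x :
  closure S x <-> forall e, 0 < e -> exists y, S y /\ d x y < e.
Proof.
split=> [Sx e e0|Sx B /d_top [e e0 eB]].
  by have [y [Sy dy]] := Sx _ (ball_nbhs x e0); exists y.
by have [y [Sy dy]] := Sx e e0; exists y; split => //; apply: eB.
Qed.

Lemma dense_distP S :
  dense S <-> forall x e, 0 < e -> exists y, S y /\ d x y < e.
Proof.
split=> [dS x e e0|dS O [x Ox]].
  have xB : [set y | d x y < e] x by rewrite /= dist_xx.
  by have [y [dy Sy]] := dS _ (ex_intro _ x xB) (open_ball x e); exists y.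
rewrite openE => /(_ x Ox) /d_top [e e0 eO].
by have [y [Sy dy]] := dS x e e0; exists y; split => //; apply: eO.
Qed.

Lemma cvg_distP (u : nat -> X) l : u @ \oo --> l <->
  forall e, 0 < e -> exists N, forall n, (N <= n)%N -> d l (u n) < e.
Proof.
split=> [ul e e0|ul B /d_top [e e0 eB]].
  by have [N _ HN] := ul _ (ball_nbhs l e0); exists N => n /HN.
by have [N HN] := ul e e0; exists N => // n /HN /eB.
Qed.

Lemma continuous_distP (f : X -> X) x : {for x, continuous f} ->
  forall e, 0 < e -> exists2 del, 0 < del & forall y, d x y < del -> d (f x) (f y) < e.
Proof.
by move=> fx e e0; have /d_top [del del0 delB] := fx _ (ball_nbhs (f x) e0); exists del.
Qed.

End MetricTopology.

Section TvsContinuity.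
Variables (K : numFieldType) (X : topologicalLmodType K).

Lemma continuousD_tvs (Y : topologicalType) (f g : Y -> X) :
  continuous f -> continuous g -> continuous (fun x => f x + g x).
Proof.
move=> cf cg x; apply: (@continuous_comp _ _ _ (fun x => (f x, g x))
  (fun z : X * X => z.1 + z.2)); last exact: add_continuous.
by apply: cvg_pair; [exact: cf|exact: cg].
Qed.

Lemma continuousZ_tvs (Y : topologicalType) (c : K) (f : Y -> X) :
  continuous f -> continuous (fun x => c *: f x).
Proof.
move=> cf x; apply: (@continuous_comp _ _ _ (fun x => ((c : K^o), f x))
  (fun z : K^o * X => z.1 *: z.2)); last exact: scale_continuous.
by apply: (@cvg_pair _ _ _ _ (nbhs (c : K^o))); [exact: cvg_cst|exact: cf].
Qed.

Lemma continuous_sum_tvs (Y : topologicalType) n (F : nat -> Y -> X) :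
  (forall i, continuous (F i)) -> continuous (fun x => \sum_(i < n) F i x).
Proof.
move=> cF; elim: n => [|n IH].
  by under eq_fun do rewrite big_ord0; move=> x; exact: cvg_cst.
by under eq_fun do rewrite big_ord_recr /=; exact: continuousD_tvs.
Qed.

Lemma cvgD_tvs (u v : nat -> X) a b : u @ \oo --> a -> v @ \oo --> b ->
  (fun n => u n + v n) @ \oo --> a + b.
Proof.
move=> ua vb; apply: (@continuous_cvg _ _ _ _ _ (fun n => (u n, v n))
  (fun z : X * X => z.1 + z.2) (a, b)); first exact: add_continuous.
exact: cvg_pair.
Qed.

Lemma cvgZ_tvs (s : nat -> K) (v : nat -> X) (k : K) b :
  s @ \oo --> k -> v @ \oo --> b -> (fun n => s n *: v n) @ \oo --> k *: b.
Proof.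
move=> sk vb; exact: (@continuous_cvg _ _ _ _ _ (fun n => ((s n : K^o), v n))
  (fun z : K^o * X => z.1 *: z.2) ((k : K^o), b)
  (@scale_continuous _ _ ((k : K^o), b)) (cvg_pair sk vb)).
Qed.

Lemma cvg_sum_tvs n (F : nat -> nat -> X) (l : nat -> X) :
  (forall i, (fun k => F k i) @ \oo --> l i) ->
  (fun k => \sum_(i < n) F k i) @ \oo --> \sum_(i < n) l i.
Proof.
move=> Fl; elim: n => [|n IH].
  by rewrite big_ord0; under eq_fun do rewrite big_ord0; exact: cvg_cst.
by rewrite big_ord_recr; under eq_fun do rewrite big_ord_recr /=; exact: cvgD_tvs.
Qed.

End TvsContinuity.

Lemma cvg_subseq (Y : topologicalType) (u : nat -> Y) (h : nat -> nat) (l : Y) :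
  (forall k, (k < h k)%N) -> u @ \oo --> l -> (fun k => u (h k)) @ \oo --> l.
Proof.
move=> hk ul B /ul [N _ HN]; exists N => // k /= Nk; apply: HN => /=.
exact: (leq_trans Nk (ltnW (hk k))).
Qed.

Section PolyCalculus.
Variables (K : comNzRingType) (X : lmodType K) (T : {linear X -> X}).
Implicit Types (p q : {poly K}) (u v : X) (c : K).

Definition poly_op p v : X := \sum_(i < size p) p`_i *: iter i T v.

Lemma poly_op_widen n p v : (size p <= n)%N ->
  poly_op p v = \sum_(i < n) p`_i *: iter i T v.
Proof.
move=> pn; rewrite /poly_op (big_ord_widen n (fun i => p`_i *: iter i T v) pn).
rewrite big_mkcond; apply: eq_bigr => i _; case: ifP => // /negbT.
by rewrite -leqNgt => /(nth_default 0) ->; rewrite scale0r.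
Qed.

Lemma poly_op0 v : poly_op 0 v = 0.
Proof. by rewrite /poly_op size_poly0 big_ord0. Qed.

Lemma poly_opD p q v : poly_op (p + q) v = poly_op p v + poly_op q v.
Proof.
rewrite (poly_op_widen _ (size_polyD p q)) (poly_op_widen _ (leq_maxl (size p) (size q))).
rewrite (poly_op_widen _ (leq_maxr (size p) (size q))) -big_split.
by apply: eq_bigr => i _; rewrite coefD scalerDl.
Qed.

Lemma poly_opZ c p v : poly_op (c *: p) v = c *: poly_op p v.
Proof.
rewrite (poly_op_widen _ (size_scale_leq c p)) /poly_op scaler_sumr.
by apply: eq_bigr => i _; rewrite coefZ scalerA.
Qed.

Lemma poly_opB p q v : poly_op (p - q) v = poly_op p v - poly_op q v.
Proof. by rewrite poly_opD -(scaleN1r q) poly_opZ scaleN1r. Qed.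

Lemma poly_op_sum n (F : nat -> {poly K}) v :
  poly_op (\sum_(i < n) F i) v = \sum_(i < n) poly_op (F i) v.
Proof.
elim: n => [|n IH]; first by rewrite !big_ord0 poly_op0.
by rewrite !big_ord_recr /= poly_opD IH.
Qed.

Lemma poly_opC c v : poly_op c%:P v = c *: v.
Proof. by rewrite (poly_op_widen _ (size_polyC_leq1 c)) big_ord1 coefC. Qed.

Lemma poly_opXM p v : poly_op ('X * p) v = T (poly_op p v).
Proof.
have sz : (size ('X * p)%R <= (size p).+1)%N.
  by apply: (leq_trans (size_polyMleq _ _)); rewrite size_polyX.
rewrite (poly_op_widen _ sz) big_ord_recl coefXM /= scale0r add0r /poly_op.
by rewrite linear_sum; apply: eq_bigr => i _; rewrite coefXM /= linearZ.
Qed.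

Lemma iter_linearZ i c u : iter i T (c *: u) = c *: iter i T u.
Proof. by elim: i => //= i ->; rewrite linearZ. Qed.

Lemma poly_op_vZ p c u : poly_op p (c *: u) = c *: poly_op p u.
Proof.
rewrite /poly_op scaler_sumr; apply: eq_bigr => i _.
by rewrite iter_linearZ !scalerA mulrC.
Qed.

Lemma poly_opM p q v : poly_op (p * q) v = poly_op p (poly_op q v).
Proof.
elim/poly_ind: p => [|p c IH]; first by rewrite mul0r !poly_op0.
rewrite mulrDl -mulrA (mulrC 'X) mulrA mul_polyC -(mulrC 'X).
by rewrite poly_opD poly_opZ poly_opXM IH poly_opD (mulrC p) poly_opXM poly_opC.
Qed.

Lemma poly_opX v : poly_op 'X v = T v.
Proof. by rewrite -(mulr1 'X) poly_opXM poly_opC scale1r. Qed.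

Lemma poly_opXn n v : poly_op 'X^n v = iter n T v.
Proof.
elim: n => [|n IH]; first by rewrite expr0 poly_opC scale1r.
by rewrite exprS poly_opXM IH.
Qed.

Lemma poly_op_iter p n v : poly_op p (iter n T v) = iter n T (poly_op p v).
Proof. by rewrite -poly_opXn -poly_opM mulrC poly_opM poly_opXn. Qed.

Lemma poly_op_comp_scale q (a : K) v :
  poly_op (q \Po (a *: 'X)) v = \sum_(i < size q) (q`_i * a ^+ i) *: iter i T v.
Proof.
rewrite comp_polyE (poly_op_sum (size q) (fun i => q`_i *: (a *: 'X) ^+ i)).
by apply: eq_bigr => i _; rewrite poly_opZ exprZn poly_opZ poly_opXn scalerA.
Qed.

End PolyCalculus.

Lemma orbit_spanE (K : numFieldType) (X : lmodType K) (T : {linear X -> X}) x :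
  orbit_span T x = [set poly_op T p x | p in setT].
Proof.
apply/seteqP; split => y /=.
  move=> [N [c ->]]; exists (\poly_(i < N) c i) => //.
  rewrite (poly_op_widen _ _ (size_poly _ _)); apply: eq_bigr => i _.
  by rewrite coef_poly ltn_ord.
by move=> [p _ <-]; exists (size p), (fun i => p`_i).
Qed.

(* The point is the limit
   of centres of nested balls B(y_k, s_k), where B(y_(k+1), 2 s_(k+1)) lies in
   G_k and in the half-ball of B(y_k, s_k), and s_(k+1) <= 1/(k+1); the first
   ball is centred at an arbitrary point x0 (the space must be nonempty). *)
Section Baire.
Variables (R : realType) (X : topologicalType) (d : X -> X -> R).
Hypotheses (d_metric : is_metric d) (d_top : metric_induces_topology d).
Hypothesis d_complete : metric_complete d.
Variable G : nat -> set X.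
Hypotheses (G_open : forall k, open (G k)) (G_dense : forall k, dense (G k)).

Lemma baire_step k c r : 0 < r -> exists y s, [/\ 0 < s, s <= k.+1%:R^-1 &
  forall z, d y z < 2 * s -> G k z /\ d c z < r / 2].
Proof.
move=> r0; have r2 : 0 < r / 2 by rewrite divr_gt0.
have [y [Gy dy]] := proj1 (dense_distP d_metric d_top (G k)) (G_dense k) c _ r2.
have oU : open (G k `&` [set z | d c z < r / 2]).
  by apply: openI => //; exact: open_ball.
have [e e0 eU] : exists2 e, 0 < e & [set z | d y z < e] `<=` G k `&` [set z | d c z < r / 2].
  by apply/d_top; move: oU; rewrite openE; apply.
exists y, (Num.min (e / 2) k.+1%:R^-1); split.
- by rewrite lt_min divr_gt0 //= invS_gt0.
- by rewrite ge_min lexx orbT.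
- move=> z dz; apply: eU => /=.
  have : Num.min (e / 2) k.+1%:R^-1 <= e / 2 by rewrite ge_min lexx.
  lra.
Qed.

Lemma baire (x0 : X) : exists x, forall k, G k x.
Proof.
have step (t : nat * X * R) : exists ys : X * R, 0 < t.2 ->
    [/\ 0 < ys.2, ys.2 <= t.1.1.+1%:R^-1 &
      forall z, d ys.1 z < 2 * ys.2 -> G t.1.1 z /\ d t.1.2 z < t.2 / 2].
  case: t => [[k c] r] /=; have [r0|] := pselect (0 < r); last by exists (c, r).
  by have [y [s hs]] := baire_step k c r0; exists (y, s).
have [f Hf] := choice step.
pose ball := fix ball (k : nat) : X * R := if k is k'.+1 then f (k', (ball k').1, (ball k').2)
  else (x0, (1 : R)).
have ball_pos k : 0 < (ball k).2.
  by elim: k => [|k IH] /=; [exact: ltr01|case: (Hf (k, (ball k).1, (ball k).2) IH)].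
have ballS k : [/\ 0 < (ball k.+1).2, (ball k.+1).2 <= k.+1%:R^-1 &
    forall z, d (ball k.+1).1 z < 2 * (ball k.+1).2 ->
      G k z /\ d (ball k).1 z < (ball k).2 / 2].
  exact: (Hf (k, (ball k).1, (ball k).2) (ball_pos k)).
have nested k m z : d (ball (k + m)%N).1 z < (ball (k + m)%N).2 ->
    d (ball k).1 z < (ball k).2.
  elim: m z => [|m IH] z; first by rewrite addn0.
  rewrite addnS => dz; apply: IH; have [_ _ sub] := ballS (k + m)%N.
  have [_ ] := sub z ltac:(by have := ball_pos (k + m).+1; lra).
  by have := ball_pos (k + m)%N; lra.
have centre_in k n : (k <= n)%N -> d (ball k).1 (ball n).1 < (ball k).2.
  move=> kn; rewrite -(subnKC kn); apply: (nested k (n - k)%N).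
  by rewrite (dist_xx d_metric); exact: ball_pos.
have [x yx] : exists x : X, (fun n => (ball n).1) @ \oo --> x.
  apply: d_complete => e e0; have e2 : 0 < e / 2 by rewrite divr_gt0.
  have [N hN] := invS_lt e2.
  exists N.+1 => m n hm hn; have [_ sN _] := ballS N.
  have := centre_in _ _ hm; have := centre_in _ _ hn.
  rewrite (dist_sym d_metric (ball N.+1).1 (ball m).1).
  have := dist_triangle d_metric (ball m).1 (ball N.+1).1 (ball n).1.
  by move: (N.+1%:R^-1 : R) hN sN => t hN sN; lra.
exists x => k; have [_ _ sub] := ballS k; apply: (proj1 (sub x _)).
have [N hN] := proj1 (cvg_distP d_top _ x) yx _ (ball_pos k.+1).
have := hN (maxn N k.+1) (leq_maxl _ _); have := centre_in _ _ (leq_maxr N k.+1).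
have := dist_triangle d_metric (ball k.+1).1 (ball (maxn N k.+1)).1 x.
by rewrite (dist_sym d_metric x); lra.
Qed.

End Baire.

Section Dynamics.
Variables (R : realType) (K : numFieldType) (X : topologicalLmodType K).
Variables (T : {linear X -> X}) (d : X -> X -> R).
Hypotheses (d_metric : is_metric d) (d_top : metric_induces_topology d).
Hypothesis T_cont : continuous T.

Lemma iter_continuous n : continuous (iter n T).
Proof.
elim: n => [|n IH] /=; first by move=> x; exact: cvg_id.
by move=> x; apply: (@continuous_comp _ _ _ (iter n T) T x (IH x)); exact: T_cont.
Qed.

Lemma poly_op_continuous p : continuous (poly_op T p).
Proof.
apply: (@continuous_sum_tvs _ _ _ _ (fun i x => p`_i *: iter i T x)) => i.
by apply: continuousZ_tvs; exact: iter_continuous.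
Qed.

(* A recurrent vector returns arbitrarily close to itself at arbitrarily late
   times (if it is periodic this is clear, otherwise the return times found
   for smaller and smaller radii must go to infinity). *)
Lemma late_return y : recurrent_vector T y -> forall N e, 0 < e ->
  exists n, (N < n)%N /\ d y (iter n T y) < e.
Proof.
move=> /(closure_distP d_top) ry; elim=> [|N IH] e e0.
  by have [_ [[n n1 <-] dn]] := ry e e0; exists n.
have [per|nper] := pselect (iter N.+1 T y = y).
  exists (N.+1 + N.+1)%N; rewrite iterD per per (dist_xx d_metric).
  by split => //; rewrite addSn ltnS leq_addl.
have e1 : 0 < d y (iter N.+1 T y).
  rewrite lt_neqAle (dist_ge0 d_metric) andbT eq_sym.
  by apply/negP => /eqP /(dist_eq0 d_metric) yT; apply: nper.
have [n [Nn dn]] := IH _ (ltac:(by rewrite lt_min e0 e1) : 0 < Num.min e (d y (iter N.+1 T y))).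
exists n; split; last by move: dn; rewrite lt_min => /andP[].
rewrite ltn_neqAle Nn andbT; apply/eqP => Nn'.
by move: dn; rewrite -Nn' lt_min ltxx andbF.
Qed.

Lemma recurrence_times y : recurrent_vector T y -> exists h : nat -> nat,
  [/\ (0 < h 0)%N, (forall k, (h k < h k.+1)%N) &
      (fun k => iter (h k) T y) @ \oo --> y].
Proof.
move=> ry; have [g Hg] := choice (fun t : nat * nat =>
  late_return ry t.1 (invS_gt0 R t.2)).
pose h := fix h (k : nat) : nat := if k is k'.+1 then g (h k', k'.+1) else g (0, 0)%N.
have dh k : d y (iter (h k) T y) < k.+1%:R^-1.
  by case: k => [|k]; [case: (Hg (0, 0)%N)|case: (Hg (h k, k.+1))].
exists h; split; first by case: (Hg (0, 0)%N).
  by move=> k; case: (Hg (h k, k.+1)).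
apply/(cvg_distP d_top) => e e0; have [N hN] := invS_lt e0; exists N => k Nk.
have := dh k; have := invS_le R Nk.
by move: (k.+1%:R^-1 : R) (N.+1%:R^-1 : R) hN => r1 r2 hN; lra.
Qed.

(* If p(T) has dense range, it maps cyclic vectors to cyclic vectors:
   p(T) q(T) x ranges over p(T) applied to a dense set. *)
Lemma cyclic_poly_op x p : cyclic_vector T x -> dense (range (poly_op T p)) ->
  cyclic_vector T (poly_op T p x).
Proof.
rewrite /cyclic_vector !orbit_spanE !(dense_distP d_metric d_top) => cx dp z e e0.
have e2 : 0 < e / 2 by rewrite divr_gt0.
have [_ [[w _ <-] dw]] := dp z _ e2.
have [del del0 Hdel] := continuous_distP d_top (@poly_op_continuous p w) e2.
have [_ [[q _ <-] dq]] := cx w del del0.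
exists (poly_op T p (poly_op T q x)); split; first by exists q; rewrite // -!poly_opM mulrC.
have := Hdel _ dq; have := dist_triangle d_metric z (poly_op T p w) (poly_op T p (poly_op T q x)).
lra.
Qed.

Lemma cyclic_vector_approx (D : set X) x : dense D ->
  cyclic_vector T x <->
  forall a m, D a -> exists p, d a (poly_op T p x) < m.+1%:R^-1.
Proof.
move=> dD; rewrite /cyclic_vector orbit_spanE (dense_distP d_metric d_top); split.
  by move=> cx a m _; have [_ [[p _ <-] dp]] := cx a _ (invS_gt0 R m); exists p.
move=> cx z e e0; have e2 : 0 < e / 2 by rewrite divr_gt0.
have [a [Da da]] := proj1 (dense_distP d_metric d_top D) dD z _ e2.
have [m hm] := invS_lt e2; have [p dp] := cx a m Da.
exists (poly_op T p x); split; first by exists p.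
have := dist_triangle d_metric z a (poly_op T p x).
by move: (m.+1%:R^-1 : R) hm dp => r hm dp; lra.
Qed.

Lemma open_approx a r : open [set x | exists p, d a (poly_op T p x) < r].
Proof.
rewrite openE => x [p dp].
have px := @poly_op_continuous p x _ (open_nbhs_nbhs (conj (open_ball d_metric d_top a r) dp)).
apply: (@filterS _ (nbhs x) _ (poly_op T p @^-1` [set y | d a y < r])) => //.
by move=> y /= dy; exists p.
Qed.

(* In a separable space the cyclic vectors form a G_delta set: enumerate a
   countable dense set D by an injection f into nat, and intersect over the
   pairs (f a, m) the open sets "some p(T) x is 1/(m+1)-close to a". *)
Lemma cyclic_Gdelta : Defs.separable X -> Gdelta [set x | cyclic_vector T x].
Proof.
case=> D [/countable_injP [f finj] dD].
pose O n m := [set x | forall a, D a -> f a = n ->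
  exists p, d a (poly_op T p x) < m.+1%:R^-1].
have oO n m : open (O n m).
  have [[a [Da fa]]|noa] := pselect (exists a, D a /\ f a = n); last first.
    suff -> : O n m = setT by exact: openT.
    by apply/seteqP; split => x //= _ a Da fa; exfalso; apply: noa; exists a.
  suff -> : O n m = [set x | exists p, d a (poly_op T p x) < m.+1%:R^-1].
    exact: open_approx.
  apply/seteqP; split => x /= ax; first exact: ax.
  by move=> a' Da' fa'; have -> // : a' = a; apply: finj; rewrite ?inE // fa fa'.
pose F k := if @unpickle (nat * nat)%type k is Some nm then O nm.1 nm.2 else setT.
exists F; first by move=> k; rewrite /F; case: (unpickle k) => [[n m]|]; rewrite //; exact: openT.
apply/seteqP; split => x /=.
  move=> /(cyclic_vector_approx x dD) cx k _; rewrite /F.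
  by case: (unpickle k) => [[n m]|] //= a Da _; apply: cx.
move=> Fx; apply/(cyclic_vector_approx x dD) => a m Da.
by have := Fx (pickle (f a, m)) I; rewrite /F pickleK /=; apply.
Qed.

Definition near_return m := [set x | exists n, (0 < n)%N /\ d x (iter n T x) < m.+1%:R^-1].

Lemma open_near_return m : open (near_return m).
Proof.
rewrite openE => x [n [n0 dn]].
set g := (m.+1%:R^-1 - d x (iter n T x)) / 2.
have g0 : 0 < g by rewrite divr_gt0 // subr_gt0.
have [del del0 Hdel] := continuous_distP d_top (@iter_continuous n x) g0.
apply/d_top; exists (Num.min del g); first by rewrite lt_min del0 g0.
move=> y /=; rewrite lt_min => /andP[d1 d2]; exists n; split => //.
have := Hdel y d1; have := dist_triangle d_metric y x (iter n T y).
have := dist_triangle d_metric x (iter n T x) (iter n T y).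
rewrite (dist_sym d_metric y x) /g in d2 *.
by move: (m.+1%:R^-1 : R) dn d2 => r dn d2; lra.
Qed.

Lemma dense_near_return m : recurrent T -> dense (near_return m).
Proof.
apply: dense_subset => x /(closure_distP d_top) /(_ _ (invS_gt0 R m)).
by move=> [_ [[n n0 <-] dn]]; exists n.
Qed.

(* A vector which is both cyclic and recurrent makes T quasi-rigid: along the
   return times of x, T^(n_k) p(T) x = p(T) T^(n_k) x --> p(T) x on the dense
   set of all p(T) x. *)
Lemma quasi_rigid_of_cyclic_recurrent x :
  cyclic_vector T x -> recurrent_vector T x -> quasi_rigid T.
Proof.
move=> cx rx; have [h [h0 hS hx]] := recurrence_times rx.
exists h; split => //; exists (orbit_span T x); split => // y.
rewrite orbit_spanE => -[p _ <-].
have -> : (fun k => iter (h k) T (poly_op T p x)) = poly_op T p \o (fun k => iter (h k) T x).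
  by apply: funext => k /=; rewrite poly_op_iter.
exact: (continuous_cvg _ (@poly_op_continuous p x) hx).
Qed.

Hypothesis d_complete : metric_complete d.

(* With a dense set of cyclic vectors, Baire's theorem applied to the dense
   open sets (pieces of the G_delta of cyclic vectors) /\ near_return m gives
   a vector that is both cyclic and recurrent. *)
Lemma cyclic_recurrent_vector : Defs.separable X -> recurrent T ->
  dense [set x | cyclic_vector T x] ->
  exists x, cyclic_vector T x /\ recurrent_vector T x.
Proof.
move=> sep rec dcyc; have [F oF eqF] := cyclic_Gdelta sep.
have dF k : dense (F k).
  by apply: (dense_subset _ dcyc) => x; rewrite eqF; apply.
have [x Fx] := baire d_metric d_top d_complete
  (fun k => openI (oF k) (open_near_return k))
  (fun k => denseI (oF k) (dF k) (dense_near_return k rec)) 0.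
exists x; split.
  by have : [set x | cyclic_vector T x] x by rewrite eqF => k _; case: (Fx k).
apply/(closure_distP d_top) => e e0; have [m hm] := invS_lt e0.
case: (Fx m) => _ [n [n0 dn]]; exists (iter n T x); split; first by exists n.
by move: (m.+1%:R^-1 : R) hm dn => r hm dn; lra.
Qed.

Lemma conclusion_of_dense_cyclic : Defs.separable X -> recurrent T ->
  dense [set x | cyclic_vector T x] ->
  (dense [set x | cyclic_vector T x] /\ Gdelta [set x | cyclic_vector T x])
  /\ quasi_rigid T.
Proof.
move=> sep rec dcyc; split; first by split => //; exact: cyclic_Gdelta.
have [x [cx rx]] := cyclic_recurrent_vector sep rec dcyc.
exact: quasi_rigid_of_cyclic_recurrent cx rx.
Qed.

End Dynamics.

Lemma increasing_gt_index (h : nat -> nat) :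
  (0 < h 0)%N -> (forall k, (h k < h k.+1)%N) -> forall k, (k < h k)%N.
Proof. by move=> h0 hS; elim=> [|k IH] //; exact: leq_ltn_trans IH (hS k). Qed.

Lemma cvg_expr_one (K : numFieldType) (s : nat -> K) i :
  s @ \oo --> (1 : K) -> (fun k => s k ^+ i) @ \oo --> (1 : K).
Proof.
move=> s1; elim: i => [|i IH]; first by under eq_fun do rewrite expr0; exact: cvg_cst.
by under eq_fun do rewrite exprSr; rewrite -(mulr1 1); apply: cvgM.
Qed.

Section DenseRange.
Variables (R : realType) (K : numFieldType) (X : topologicalLmodType K).
Variables (T : {linear X -> X}) (d : X -> X -> R).
Hypotheses (d_metric : is_metric d) (d_top : metric_induces_topology d).
Hypothesis T_cont : continuous T.
Hypothesis T_rec : recurrent T.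

Definition dense_range (p : {poly K}) := dense (range (poly_op T p)).

Lemma dense_rangeM p q : dense_range p -> dense_range q -> dense_range (p * q).
Proof.
rewrite /dense_range !(dense_distP d_metric d_top) => dp dq z e e0.
have e2 : 0 < e / 2 by rewrite divr_gt0.
have [_ [[w _ <-] dw]] := dp z _ e2.
have [del del0 Hdel] := continuous_distP d_top (@poly_op_continuous _ _ _ T_cont p w) e2.
have [_ [[u _ <-] du]] := dq w del del0.
exists (poly_op T (p * q) u); split; first by exists u.
rewrite poly_opM; have := Hdel _ du.
by have := dist_triangle d_metric z (poly_op T p w) (poly_op T p (poly_op T q u)); lra.
Qed.

Lemma dense_rangeZ c p : c != 0 -> dense_range p -> dense_range (c *: p).
Proof.
move=> c0; apply: dense_subset => _ [w _ <-]; exists (c^-1 *: w) => //.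
by rewrite poly_opZ poly_op_vZ scalerA divff // scale1r.
Qed.

Lemma dense_rangeC c : c != 0 -> dense_range c%:P.
Proof.
move=> c0; rewrite /dense_range (dense_distP d_metric d_top) => z e e0.
exists z; split; last by rewrite (dist_xx d_metric).
by exists (c^-1 *: z) => //; rewrite poly_opC scalerA divff // scale1r.
Qed.

(* Indeed recurrent
   vectors y are dense, and P_(h k)(T) y lies in the range of p(T). *)
Lemma dense_range_of_multiples p (P : nat -> {poly K}) : (forall n, p %| P n) ->
  (forall y (h : nat -> nat), (forall k, (k < h k)%N) ->
     (fun k => iter (h k) T y) @ \oo --> y ->
     (fun k => poly_op T (P (h k)) y) @ \oo --> y) -> dense_range p.
Proof.
move=> pP Pcvg; rewrite /dense_range (dense_distP d_metric d_top) => z e e0.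
have e2 : 0 < e / 2 by rewrite divr_gt0.
have [y [ry dy]] := proj1 (dense_distP d_metric d_top _) T_rec z _ e2.
have [h [h0 hS hy]] := recurrence_times d_metric d_top ry.
have := Pcvg y h (increasing_gt_index h0 hS) hy.
move=> /(cvg_distP d_top) /(_ _ e2) [N HN]; have := HN N (leqnn N).
have /dvdpP [q ->] := pP (h N); move=> dN.
exists (poly_op T (q * p) y); split; first by exists (poly_op T q y); rewrite // mulrC poly_opM.
by have := dist_triangle d_metric z y (poly_op T (q * p) y); lra.
Qed.

(* |r| < 1: use P_n = X^n - r^n, so P_n(T) y = T^n y - r^n y. *)
Lemma dense_range_root_inside r : (fun n => r ^+ n) @ \oo --> (0 : K) ->
  dense_range ('X - r%:P).
Proof.
move=> rn; apply: (@dense_range_of_multiples _ (fun n => 'X^n - (r ^+ n)%:P)).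
  by move=> n; rewrite dvdp_XsubCl /root !hornerE subrr.
move=> y h hk hy.
have -> : (fun k => poly_op T ('X^(h k) - (r ^+ h k)%:P) y) =
    (fun k => iter (h k) T y + (- r ^+ h k) *: y).
  by apply: funext => k; rewrite poly_opD -polyCN poly_opC poly_opXn.
rewrite -[X in _ --> X]addr0; apply: cvgD_tvs => //.
rewrite -(scale0r y); apply: cvgZ_tvs; last exact: cvg_cst.
by rewrite -oppr0; apply: cvgN; exact: cvg_subseq hk rn.
Qed.

(* |r| > 1: use P_n = 1 - r^-n X^n, so P_n(T) y = y - r^-n T^n y. *)
Lemma dense_range_root_outside r : r != 0 ->
  (fun n => r^-1 ^+ n) @ \oo --> (0 : K) -> dense_range ('X - r%:P).
Proof.
move=> r0 rn; apply: (@dense_range_of_multiples _ (fun n => 1 - r^-1 ^+ n *: 'X^n)).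
  by move=> n; rewrite dvdp_XsubCl /root !hornerE -exprMn mulVf // expr1n subrr.
move=> y h hk hy.
have -> : (fun k => poly_op T (1 - r^-1 ^+ h k *: 'X^(h k)) y) =
    (fun k => y + (- r^-1 ^+ h k) *: iter (h k) T y).
  by apply: funext => k; rewrite poly_opD -scaleNr poly_opZ poly_opXn poly_opC scale1r.
rewrite -[X in _ --> X]addr0; apply: cvgD_tvs; first exact: cvg_cst.
rewrite -(scale0r y); apply: cvgZ_tvs => //.
by rewrite -oppr0; apply: cvgN; exact: cvg_subseq hk rn.
Qed.

(* Let x be cyclic and q(T) x close to a target.
   If c_k --> 0 and the rescaled polynomials q((1 + c_k) X) eventually give
   operators with dense range, then q((1 + c_k) X)(T) x --> q(T) x and each of these vectors
   is cyclic (cyclic_poly_op); so cyclic vectors are dense. *)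
Lemma dense_cyclic_of_rescaling (c : nat -> K) :
  c @ \oo --> (0 : K) -> (forall k, c k != 0) ->
  (forall q, q != 0 -> exists M, forall k, (M <= k)%N ->
     dense_range (q \Po ((1 + c k) *: 'X))) ->
  cyclic_operator T -> dense [set x | cyclic_vector T x].
Proof.
move=> c_to0 c_neq0 rescale [x cx].
have c1 : (fun k => 1 + c k) @ \oo --> (1 : K).
  by rewrite -[X in _ --> X]addr0; apply: cvgD => //; exact: cvg_cst.
apply/(dense_distP d_metric d_top) => z e e0; have e2 : 0 < e / 2 by rewrite divr_gt0.
have := cx; rewrite /cyclic_vector orbit_spanE (dense_distP d_metric d_top).
move=> /(_ z _ e2) [_ [[q _ <-] dq]].
suff [p [Dp dp]] : exists p, dense_range p /\ d (poly_op T q x) (poly_op T p x) < e / 2.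
  exists (poly_op T p x); split; first exact: (cyclic_poly_op d_metric d_top T_cont cx Dp).
  by have := dist_triangle d_metric z (poly_op T q x) (poly_op T p x); lra.
have [->|q0] := eqVneq q 0.
  have cx0 : (fun k => poly_op T (c k)%:P x) @ \oo --> poly_op T 0 x.
    under eq_fun do rewrite poly_opC; rewrite poly_op0 -(scale0r x).
    by apply: cvgZ_tvs => //; exact: cvg_cst.
  have [N HN] := proj1 (cvg_distP d_top _ _) cx0 _ e2.
  by exists (c N)%:P; split; [exact: dense_rangeC|exact: HN].
have [M HM] := rescale q q0.
have qk : (fun k => poly_op T (q \Po ((1 + c k) *: 'X)) x) @ \oo --> poly_op T q x.
  under eq_fun do rewrite poly_op_comp_scale.
  apply: (@cvg_sum_tvs _ _ (size q) (fun k i => (q`_i * (1 + c k) ^+ i) *: iter i T x)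
    (fun i => q`_i *: iter i T x)) => i.
  rewrite -[X in _ --> X *: _](mulr1 q`_i); apply: cvgZ_tvs; last exact: cvg_cst.
  apply: cvgM; first exact: cvg_cst.
  exact: cvg_expr_one.
have [N HN] := proj1 (cvg_distP d_top _ _) qk _ e2.
exists (q \Po ((1 + c (maxn N M)) *: 'X)); split; first by apply: HM; rewrite leq_maxr.
by apply: HN; rewrite leq_maxl.
Qed.

End DenseRange.

Section RootFactors.
Variables (R : realType) (K : numFieldType) (X : topologicalLmodType K).
Variables (T : {linear X -> X}) (d : X -> X -> R).
Hypotheses (d_metric : is_metric d) (d_top : metric_induces_topology d).
Hypotheses (T_cont : continuous T) (T_rec : recurrent T).
Hypothesis K_geometric : forall s : K, `|s| < 1 -> (fun n => s ^+ n) @ \oo --> (0 : K).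

Lemma dense_range_XsubC r : `|r| != 1 -> dense_range T ('X - r%:P).
Proof.
move=> r1; have [lt1|gt1|eq1] := real_ltgtP (normr_real r) (@real1 K).
- exact: (dense_range_root_inside d_metric d_top T_rec (K_geometric lt1)).
- have r0 : r != 0 by apply: contraTneq gt1 => ->; rewrite normr0 ltr10.
  apply: (dense_range_root_outside d_metric d_top T_rec r0); apply: K_geometric.
  by rewrite normfV invf_lt1 //; exact: lt_trans ltr01 gt1.
- by rewrite eq1 eqxx in r1.
Qed.

Lemma dense_range_split (a : K) (rs : seq K) : a != 0 ->
  (forall z, z \in rs -> `|z| != 1) ->
  dense_range T (a *: \prod_(z <- rs) ('X - z%:P)).
Proof.
move=> a0 rs1; apply: (dense_rangeZ a0).
elim: rs rs1 => [|z rs IH] rs1.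
  by rewrite big_nil; apply: (dense_rangeC T d_metric d_top); exact: oner_neq0.
rewrite big_cons; apply: (dense_rangeM d_metric d_top T_cont).
  by apply: dense_range_XsubC; apply: rs1; rewrite mem_head.
by apply: IH => w ws; apply: rs1; rewrite in_cons ws orbT.
Qed.

End RootFactors.
Local Open Scope complex_scope.

Lemma injective_eventually_notin (T : eqType) (u : nat -> T) (L : seq T) :
  injective u -> exists M, forall k, (M <= k)%N -> u k \notin L.
Proof.
move=> u_inj; elim: L => [|l L [M1 H1]]; first by exists 0%N.
have [[k0 e]|nol] := pselect (exists k0, u k0 = l); last first.
  by exists M1 => k k1; rewrite in_cons negb_or H1 // andbT; apply/eqP => ul; apply: nol; exists k.
exists (maxn M1 k0.+1) => k; rewrite geq_max => /andP[k1 k2].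
rewrite in_cons negb_or H1 // andbT; apply/eqP => ul.
by move: k2; rewrite -e in ul; rewrite (u_inj _ _ ul) ltnn.
Qed.

Lemma comp_scaleX_neq0 (F : fieldType) (q : {poly F}) (a : F) : a != 0 -> q != 0 ->
  q \Po (a *: 'X) != 0.
Proof.
move=> a0 q0; apply: contra q0 => /eqP qa0.
have <- : (q \Po (a *: 'X)) \Po (a^-1 *: 'X) = q.
  by rewrite -comp_polyA comp_polyZ comp_polyX scalerA divff // scale1r comp_polyXr.
by rewrite qa0 comp_poly0.
Qed.

Section ComplexModulus.
Variable R : realType.
Local Notation C := (complex R).
Local Notation CN := (complex R : numFieldType).

Definition cmod (w : C) : R := Num.sqrt (complex.Re w ^+ 2 + complex.Im w ^+ 2).

Lemma normCE (w : C) : `|w| = (cmod w)%:C.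
Proof. by rewrite normc_def. Qed.

Lemma cmod_ge0 w : 0 <= cmod w.
Proof. exact: sqrtr_ge0. Qed.

Lemma Re_le_cmod w : `|complex.Re w| <= cmod w.
Proof.
rewrite /cmod -(sqrtr_sqr (complex.Re w)) ler_sqrt ?addr_ge0 ?sqr_ge0 //.
by rewrite lerDl sqr_ge0.
Qed.

Lemma Im_le_cmod w : `|complex.Im w| <= cmod w.
Proof.
rewrite /cmod -(sqrtr_sqr (complex.Im w)) ler_sqrt ?addr_ge0 ?sqr_ge0 //.
by rewrite lerDr sqr_ge0.
Qed.

Lemma cmodX w n : cmod (w ^+ n) = cmod w ^+ n.
Proof. by apply: (@complexI R); rewrite -normCE rmorphXn /= -normCE normrX. Qed.

Lemma cmodV w : cmod w^-1 = (cmod w)^-1.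
Proof. by apply: (@complexI R); rewrite -normCE fmorphV /= -normCE normfV. Qed.

Lemma cmod_real (r : R) : cmod r%:C = `|r|.
Proof. by rewrite /cmod /= expr0n addr0 sqrtr_sqr. Qed.

Lemma cvg_real_complex (u : nat -> R) : u @ \oo --> (0 : R) ->
  (fun n => (u n)%:C : CN) @ \oo --> (0 : CN).
Proof.
move=> u0; apply/cvgr0Pnorm_lt => eps eps0.
have : 0 < complex.Re eps by move: eps0; rewrite ltcE => /andP[].
move=> /(@cvgr0_norm_lt _ _ _ _ _ u u0) un; apply: (filterS _ un) => n unE.
rewrite normCE cmod_real ltcE /=; move: eps0; rewrite ltcE => /andP[/eqP -> _].
by rewrite eqxx unE.
Qed.

Lemma cvg_expr_complex (s : CN) : `|s| < 1 -> (fun n => s ^+ n) @ \oo --> (0 : CN).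
Proof.
rewrite normCE ltcR => s1.
have /cvg_real_complex sn : (fun n => cmod s ^+ n) @ \oo --> (0 : R).
  by apply: cvg_expr; rewrite ger0_norm ?cmod_ge0.
apply/cvgr0Pnorm_lt => eps eps0; have [N _ HN] := proj1 (cvgr0Pnorm_lt _) sn eps eps0.
exists N => // n /HN /=; rewrite !normCE cmodX cmod_real ger0_norm //.
by rewrite exprn_ge0 ?cmod_ge0.
Qed.

(* The rescaling factors 1 + 1/(k+1) > 1 used to push roots off the unit
   circle: for a nonzero p, the roots of p((1 + 1/(k+1)) X) have modulus
   |w| / (1 + 1/(k+1)) for the roots w of p, which is <> 1 for large k. *)
Definition rescaling (k : nat) : C := (1 + k.+1%:R^-1)%:C.

Lemma rescaling_inj : injective rescaling.
Proof. by move=> a b /complexI /addrI /invr_inj /eqP; rewrite eqr_nat eqSS => /eqP. Qed.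

Lemma rescaling_gt0 k : 0 < rescaling k.
Proof. by rewrite /rescaling ltcR ltr_pwDl // invr_ge0 ler0n. Qed.

Lemma rescaled_roots_off_circle (p : {poly C}) : p != 0 ->
  exists M, forall k, (M <= k)%N ->
  forall z, root (p \Po (rescaling k *: 'X)) z -> `|z| != 1.
Proof.
move=> p0; have [rs prs] := closed_field_poly_normal p.
have lc0 : lead_coef p != 0 by rewrite lead_coef_eq0.
have [M HM] := injective_eventually_notin [seq `|w| | w <- rs] rescaling_inj.
exists M => k kM z; rewrite /root horner_comp hornerZ hornerX => /eqP pz.
apply/eqP => z1; have : root p (rescaling k * z) by rewrite /root pz.
rewrite {1}prs rootZ // root_prod_XsubC => zrs.
have := HM k kM; rewrite (_ : rescaling k = `|rescaling k * z|) ?map_f //.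
by rewrite normrM z1 mulr1 gtr0_norm // rescaling_gt0.
Qed.

End ComplexModulus.

Section ComplexCase.
Variables (R : realType) (X : topologicalLmodType (complex R)).
Variables (T : {linear X -> X}) (d : X -> X -> R).
Hypotheses (d_metric : is_metric d) (d_top : metric_induces_topology d).
Hypotheses (T_cont : continuous T) (T_rec : recurrent T).

Lemma dense_range_complex (p : {poly complex R}) : p != 0 ->
  (forall z, root p z -> `|z| != 1) -> dense_range T p.
Proof.
move=> p0 p1; have [rs prs] := closed_field_poly_normal p.
have lc0 : lead_coef p != 0 by rewrite lead_coef_eq0.
rewrite prs; apply: (dense_range_split d_metric d_top T_cont T_rec) => //.
  exact: cvg_expr_complex.
by move=> z zrs; apply: p1; rewrite prs rootZ // root_prod_XsubC.
Qed.

Lemma dense_cyclic_complex : cyclic_operator T -> dense [set x | cyclic_vector T x].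
Proof.
pose c k : complex R := (k.+1%:R^-1)%:C.
have c0 k : c k != 0 by rewrite /c eq_complex /= eqxx andbT invr_eq0 pnatr_eq0.
have c_to0 : c @ \oo --> (0 : complex R : numFieldType).
  exact: (cvg_real_complex (@cvg_harmonic R)).
apply: (dense_cyclic_of_rescaling d_metric d_top T_cont c_to0 c0) => q q0.
have [M HM] := rescaled_roots_off_circle q0; exists M => k kM.
have -> : 1 + c k = rescaling R k by rewrite /rescaling /c rmorphD rmorph1.
apply: dense_range_complex; last exact: HM.
by rewrite comp_scaleX_neq0 // gt_eqF // rescaling_gt0.
Qed.

End ComplexCase.

Lemma cvg_geometric_bound (R : realType) (u : nat -> R) (rho M : R) :
  0 <= rho -> rho < 1 -> 0 <= M ->
  (forall n, `|u n| <= M * rho ^+ n) -> u @ \oo --> (0 : R).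
Proof.
move=> rho0 rho1 M0 uM; apply/cvgr0Pnorm_lt => eps eps0.
have e1 : 0 < eps / (M + 1) by rewrite divr_gt0 // ltr_wpDl.
have rho1' : `|rho| < 1 by rewrite ger0_norm.
have [N _ HN] := @cvgr0_norm_lt _ _ _ _ _ _ (cvg_expr rho1') _ e1.
exists N => // n /= Nn; have := HN n Nn; rewrite /= ger0_norm ?exprn_ge0 //.
rewrite ltr_pdivlMr ?ltr_wpDl // => rn; have := uM n.
have : 0 <= rho ^+ n by rewrite exprn_ge0.
by move: (rho ^+ n) rn => t rn; nra.
Qed.

Lemma cvg_comb0 (K : numFieldType) (X : topologicalLmodType K)
    (a b : nat -> K) (u v : nat -> X) (lu lv : X) :
  a @ \oo --> (0 : K) -> b @ \oo --> (0 : K) -> u @ \oo --> lu -> v @ \oo --> lv ->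
  (fun k => a k *: u k + b k *: v k) @ \oo --> (0 : X).
Proof.
move=> a0 b0 ul vl; rewrite -(addr0 0) -{1}(scale0r lu) -(scale0r lv).
by apply: cvgD_tvs; apply: cvgZ_tvs.
Qed.

Section ConjugateQuadratic.
Variable R : realType.
Local Notation C := (complex R).
Local Notation pC := (map_poly (real_complex R)).

Definition conj_quadratic (mu : C) : {poly R} :=
  'X^2 - (2 * complex.Re mu) *: 'X + (complex.Re mu ^+ 2 + complex.Im mu ^+ 2)%:P.

Lemma conj_quadratic_complex (mu : C) :
  pC (conj_quadratic mu) = ('X - mu%:P) * ('X - (mu^*)%:P).
Proof.
have -> : ('X - mu%:P) * ('X - (mu^*)%:P) = 'X^2 - (mu + mu^*) *: 'X + (mu * mu^*)%:P.
  by rewrite -mul_polyC polyCD polyCM; ring.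
rewrite /conj_quadratic rmorphD rmorphB /= map_polyXn map_polyZ map_polyX map_polyC /=.
by case: mu => a b /=; congr (_ - _ *: _ + _%:P);
  apply/eqP; rewrite eq_complex /=; apply/andP; split; apply/eqP; ring.
Qed.

Lemma size_conj_quadratic (mu : C) : size (conj_quadratic mu) = 3%N.
Proof.
rewrite -(size_map_poly (real_complex R)) conj_quadratic_complex.
by rewrite size_mul ?polyXsubC_eq0 // !size_XsubC.
Qed.

Lemma root_real_poly_conj (p : {poly R}) (mu : C) : root (pC p) mu -> root (pC p) mu^*.
Proof.
have conj_pC : map_poly conjc (pC p) = pC p.
  by rewrite -map_poly_comp; apply: eq_map_poly => x /=; exact: conjc_real.
by rewrite -[in X in X -> _](conjcK mu) -complex_root_conj conj_pC.
Qed.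

Lemma conj_quadratic_dvd (p : {poly R}) (mu : C) : complex.Im mu != 0 ->
  root (pC p) mu -> conj_quadratic mu %| p.
Proof.
move=> Im0 pmu; rewrite -(dvdp_map (real_complex R)) conj_quadratic_complex.
have mu_neq : mu^* != mu.
  by case: mu Im0 {pmu} => a b /= b0; rewrite eq_complex /= eqxx /=; apply: contra b0 => /eqP h; apply/eqP; lra.
have pmu' := root_real_poly_conj pmu.
move: pmu; rewrite -dvdp_XsubCl => /dvdpP [g pg].
have : root g mu^*.
  by move: pmu'; rewrite pg /root hornerM mulf_eq0 !hornerE subr_eq0 (negbTE mu_neq) orbF.
rewrite -dvdp_XsubCl => /dvdpP [h gh].
by rewrite pg gh -mulrA mulrC dvdp_mulIr.
Qed.

(* For non-real mu, (mu, 1) is a real basis of C: w = a mu + b with the real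
   coordinates a, b below, bounded by a constant times |w|. *)
Definition coord_mu (mu w : C) : R := complex.Im w / complex.Im mu.
Definition coord_one (mu w : C) : R := complex.Re w - coord_mu mu w * complex.Re mu.

Lemma coordsE (mu w : C) : complex.Im mu != 0 ->
  (coord_mu mu w)%:C * mu + (coord_one mu w)%:C = w.
Proof.
rewrite /coord_one /coord_mu; case: mu w => a b [u v] /= b0.
by apply/eqP; rewrite eq_complex /=; apply/andP; split; apply/eqP; field.
Qed.

Lemma coord_mu_le (mu w : C) : complex.Im mu != 0 ->
  `|coord_mu mu w| <= cmod w * `|complex.Im mu|^-1.
Proof.
move=> Im0; rewrite /coord_mu normrM normfV ler_wpM2r ?invr_ge0 //.
exact: Im_le_cmod.
Qed.

Lemma coord_one_le (mu w : C) : complex.Im mu != 0 ->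
  `|coord_one mu w| <= cmod w * (1 + `|complex.Im mu|^-1 * `|complex.Re mu|).
Proof.
move=> Im0; rewrite /coord_one; apply: (le_trans (ler_normB _ _)).
rewrite normrM mulrDr mulr1 mulrA; apply: lerD; first exact: Re_le_cmod.
by apply: ler_wpM2r => //; exact: coord_mu_le.
Qed.

Lemma coords_expr_cvg0 (mu nu : C) : complex.Im mu != 0 -> cmod nu < 1 ->
  (fun n => coord_mu mu (nu ^+ n)) @ \oo --> (0 : R) /\
  (fun n => coord_one mu (nu ^+ n)) @ \oo --> (0 : R).
Proof.
move=> Im0 nu1; split.
  apply: (@cvg_geometric_bound _ _ (cmod nu) (`|complex.Im mu|^-1)).
  - exact: cmod_ge0.
  - exact: nu1.
  - by rewrite invr_ge0.
  - by move=> n; rewrite mulrC -cmodX; exact: coord_mu_le.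
apply: (@cvg_geometric_bound _ _ (cmod nu) (1 + `|complex.Im mu|^-1 * `|complex.Re mu|)).
- exact: cmod_ge0.
- exact: nu1.
- by rewrite addr_ge0 // mulr_ge0 // invr_ge0.
- by move=> n; rewrite mulrC -cmodX; exact: coord_one_le.
Qed.

End ConjugateQuadratic.

Section RealCase.
Variables (R : realType) (X : topologicalLmodType R).
Variables (T : {linear X -> X}) (d : X -> X -> R).
Hypotheses (d_metric : is_metric d) (d_top : metric_induces_topology d).
Hypotheses (T_cont : continuous T) (T_rec : recurrent T).
Local Notation C := (complex R).
Local Notation pC := (map_poly (real_complex R)).

(* |mu| < 1: P_n = X^n - (a_n X + b_n) with a_n mu + b_n = mu^n vanishes at
   mu, so conj_quadratic mu divides it, and a_n, b_n --> 0. *)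
Lemma dense_range_conj_quadratic_inside (mu : C) : complex.Im mu != 0 -> cmod mu < 1 ->
  dense_range T (conj_quadratic mu).
Proof.
move=> Im0 mu1; have [a0 b0] := coords_expr_cvg0 Im0 mu1.
pose a n := coord_mu mu (mu ^+ n); pose b n := coord_one mu (mu ^+ n).
apply: (dense_range_of_multiples d_metric d_top T_rec
  (P := fun n => 'X^n - (a n *: 'X + (b n)%:P))).
  move=> n; apply: conj_quadratic_dvd => //.
  rewrite /root rmorphB rmorphD /= map_polyXn map_polyZ map_polyX map_polyC /= !hornerE.
  by rewrite coordsE // subrr.
move=> y h hk hy.
have -> : (fun k => poly_op T ('X^(h k) - (a (h k) *: 'X + (b (h k))%:P)) y) =
    (fun k => iter (h k) T y + ((- a (h k)) *: T y + (- b (h k)) *: y)).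
  apply: funext => k; rewrite poly_opB poly_opD poly_opZ poly_opX poly_opC poly_opXn.
  by rewrite opprD !scaleNr.
rewrite -[X in _ --> X]addr0; apply: cvgD_tvs => //.
apply: (cvg_comb0 (lu := T y) (lv := y)); try exact: cvg_cst.
  by rewrite -oppr0; apply: cvgN; exact: cvg_subseq hk a0.
by rewrite -oppr0; apply: cvgN; exact: cvg_subseq hk b0.
Qed.

(* |mu| > 1: P_n = 1 - X^n (a_n X + b_n) with a_n mu + b_n = mu^-n. *)
Lemma dense_range_conj_quadratic_outside (mu : C) : complex.Im mu != 0 -> 1 < cmod mu ->
  dense_range T (conj_quadratic mu).
Proof.
move=> Im0 mu1; have mu0 : mu != 0 by apply: contraTneq Im0 => ->; rewrite eqxx.
have nu1 : cmod mu^-1 < 1 by rewrite cmodV invf_lt1 //; exact: lt_trans ltr01 mu1.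
have [a0 b0] := coords_expr_cvg0 Im0 nu1.
pose a n := coord_mu mu (mu^-1 ^+ n); pose b n := coord_one mu (mu^-1 ^+ n).
apply: (dense_range_of_multiples d_metric d_top T_rec
  (P := fun n => 1 - 'X^n * (a n *: 'X + (b n)%:P))).
  move=> n; apply: conj_quadratic_dvd => //.
  rewrite /root rmorphB rmorphM rmorphD /= map_polyXn map_polyZ map_polyX map_polyC /=.
  rewrite rmorph1 !hornerE map_polyC hornerC coordsE //.
  by rewrite -exprMn mulfV // expr1n subrr.
move=> y h hk hy.
have -> : (fun k => poly_op T (1 - 'X^(h k) * (a (h k) *: 'X + (b (h k))%:P)) y) =
    (fun k => y + ((- a (h k)) *: T (iter (h k) T y) + (- b (h k)) *: iter (h k) T y)).
  apply: funext => k; rewrite poly_opB poly_opC scale1r mulrC poly_opM poly_opXn.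
  by rewrite poly_opD poly_opZ poly_opX poly_opC opprD !scaleNr.
rewrite -[X in _ --> X]addr0; apply: cvgD_tvs; first exact: cvg_cst.
apply: (cvg_comb0 (lu := T y) (lv := y)) => //.
- by rewrite -oppr0; apply: cvgN; exact: cvg_subseq hk a0.
- by rewrite -oppr0; apply: cvgN; exact: cvg_subseq hk b0.
- exact: (continuous_cvg _ (@T_cont y) hy).
Qed.

Lemma dense_range_real_factor (p : {poly R}) : size p != 1%N ->
  (forall z, root (pC p) z -> `|z| != 1) ->
  exists2 f, (f %| p) && (1 < size f)%N & dense_range T f.
Proof.
move=> p1 roots1; have [mu pmu] : exists mu, root (pC p) mu.
  by apply/closed_rootP; rewrite size_map_poly.
have mu1 : cmod mu != 1 by have := roots1 mu pmu; rewrite normCE; apply: contra => /eqP ->.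
have [Im0|Im0] := eqVneq (complex.Im mu) 0; last first.
  exists (conj_quadratic mu); first by rewrite conj_quadratic_dvd // size_conj_quadratic.
  have [lt1|gt1|eq1] := ltgtP (cmod mu) 1; last by rewrite eq1 eqxx in mu1.
    exact: dense_range_conj_quadratic_inside.
  exact: dense_range_conj_quadratic_outside.
move: pmu mu1; case: mu Im0 => r s /= -> pr r1.
exists ('X - r%:P).
  rewrite dvdp_XsubCl size_XsubC andbT; move: pr.
  by rewrite /root complexr0 (horner_map (real_complex R)) (_ : 0 = 0%:C) // (inj_eq (@complexI R)).
apply: (dense_range_XsubC d_metric d_top T_rec (@cvg_expr R)).
by move: r1; rewrite complexr0 cmod_real.
Qed.

Lemma dense_range_real n (p : {poly R}) : (size p <= n)%N -> p != 0 ->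
  (forall z, root (pC p) z -> `|z| != 1) -> dense_range T p.
Proof.
elim: n p => [|n IH] p sz p0 roots1.
  by move: p0; rewrite -size_poly_eq0 -leqn0 sz.
have [p1|p1] := eqVneq (size p) 1%N.
  have /size_poly1P [c c0 ->] : size p == 1%N by rewrite p1.
  exact: (dense_rangeC T d_metric d_top c0).
have [f /andP[fp fsz] df] := dense_range_real_factor p1 roots1.
have f0 : f != 0 by rewrite -size_poly_eq0 -lt0n (ltn_trans _ fsz).
have pE := esym (divpK fp); set g := p %/ f in pE.
have g0 : g != 0 by apply: contraNneq p0 => g0; rewrite pE g0 mul0r.
rewrite pE; apply: (dense_rangeM d_metric d_top T_cont) => //; apply: IH => //.
  by move: sz fsz; rewrite pE size_mul //; move: (size g) (size f) => a b; lia.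
by move=> z gz; apply: roots1; rewrite pE rmorphM /= rootM gz.
Qed.

Lemma dense_cyclic_real : cyclic_operator T -> dense [set x | cyclic_vector T x].
Proof.
pose c k : R := k.+1%:R^-1.
have c0 k : c k != 0 by rewrite /c invr_eq0 pnatr_eq0.
apply: (dense_cyclic_of_rescaling d_metric d_top T_cont (@cvg_harmonic R) c0) => q q0.
have pq0 : pC q != 0 by rewrite map_poly_eq0.
have [M HM] := rescaled_roots_off_circle pq0.
exists M => k kM; apply: (dense_range_real (leqnn _)).
  by apply: comp_scaleX_neq0 => //; rewrite gt_eqF // ltr_pwDl // invr_ge0 ler0n.
by move=> z; rewrite map_comp_poly map_polyZ map_polyX /=; exact: HM.
Qed.

End RealCase.

Theorem mainTheorem7 (R : realType) : thm7_for R R /\ thm7_for R (complex R).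
Proof.
split=> X T [d [d_metric d_top d_complete]] sep _ T_cont rec cyc.
  apply: (conclusion_of_dense_cyclic d_metric d_top T_cont d_complete sep rec).
  exact: (dense_cyclic_real d_metric d_top T_cont rec cyc).
apply: (conclusion_of_dense_cyclic d_metric d_top T_cont d_complete sep rec).
exact: (dense_cyclic_complex d_metric d_top T_cont rec cyc).
Qed.
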